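(* Let $G$ be a connected simple graph on $n\ge2$ vertices, let $\alpha\in\mathbb{R}$, and suppose the vertices are labeled so that $({}^\alpha m)_1+d_1\ge({}^\alpha m)_2+d_2\ge\cdots\ge({}^\alpha m)_n+d_n$. Let $\Delta$ be the maximum degree of $G$ and $N=\max_{i\sim j}d_j^\alpha/d_i^\alpha$. Then for $1\le i\le n$, writing $s_k=({}^\alpha m)_k+d_k$, \[\rho(Q(G))\le \frac{s_i+\Delta-N+\sqrt{(s_i-\Delta+N)^2+4N\sum_{k=1}^{i-1}(s_k-s_i)}}{2}.\] Equality holds if and only if $s_1=s_2=\cdots=s_n$, or there is $t$ with $2\le t\le i$ such that: if $\alpha=0$, $G$ is a bidegreed graph with $d_1=\cdots=d_{t-1}=n-1>d_t=\cdots=d_n$; if $\alpha>0$, $G$ is a bidegreed graph with $s_1>s_2=\cdots=s_n$ and $d_1=n-1>d_2=\cdots=d_n$. (For $\alpha<0$ only the first alternative occurs.)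
   Context: $Q(G)=D(G)+A(G)$ is the signless Laplacian matrix, where $A(G)$ is the adjacency matrix and $D(G)=\mathrm{diag}(d_1,\dots,d_n)$ is the diagonal matrix of vertex degrees. $i\sim j$ means $v_i,v_j$ adjacent. The generalized average degree is $({}^\alpha m)_i=\frac{\sum_{j\sim i}d_j^\alpha}{d_i^\alpha}$. $\rho$ is the spectral radius. A bidegreed graph has exactly two distinct vertex degrees. An empty sum equals $0$. *)

From Stdlib Require Import Reals Lra Lia Relations.
Open Scope R_scope.

(* Vertices are the naturals 0, ..., n-1 (paper's v_1..v_n shifted by one).
   A graph is given by a boolean adjacency relation [adj]; only its values on
   vertices < n matter. *)

Fixpoint sumR (f : nat -> R) (n : nat) : R :=
  match n with
  | O => 0
  | S k => sumR f k + f k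
  end.

Definition simple_graph (n : nat) (adj : nat -> nat -> bool) : Prop :=
  (forall i j, (i < n)%nat -> (j < n)%nat -> adj i j = adj j i) /\
  (forall i, (i < n)%nat -> adj i i = false).

Definition edge_rel (n : nat) (adj : nat -> nat -> bool) : relation nat :=
  fun a b => (a < n)%nat /\ (b < n)%nat /\ adj a b = true.

Definition connected (n : nat) (adj : nat -> nat -> bool) : Prop :=
  forall i j, (i < n)%nat -> (j < n)%nat -> clos_refl_trans nat (edge_rel n adj) i j.

Definition deg (n : nat) (adj : nat -> nat -> bool) (i : nat) : R :=
  sumR (fun j => if adj i j then 1 else 0) n.

Definition gen_avg_deg (n : nat) (adj : nat -> nat -> bool) (alpha : R) (i : nat) : R :=
  sumR (fun j => if adj i j then Rpower (deg n adj j) alpha else 0) n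
  / Rpower (deg n adj i) alpha.

Definition signless_laplacian (n : nat) (adj : nat -> nat -> bool) (i j : nat) : R :=
  (if Nat.eqb i j then deg n adj i else 0) + (if adj i j then 1 else 0).

Definition eigenvalue (n : nat) (M : nat -> nat -> R) (lam : R) : Prop :=
  exists x : nat -> R,
    (exists k, (k < n)%nat /\ x k <> 0) /\
    forall i, (i < n)%nat -> sumR (fun j => M i j * x j) n = lam * x i.

(* r is the spectral radius of M: the maximum modulus of an eigenvalue.
   (Only real eigenvalues are considered; for the real symmetric matrix Q
   this is the whole spectrum.) *)
Definition spectral_radius (n : nat) (M : nat -> nat -> R) (r : R) : Prop :=
  (exists lam, eigenvalue n M lam /\ Rabs lam = r) /\
  (forall lam, eigenvalue n M lam -> Rabs lam <= r).

Definition is_max_degree (n : nat) (adj : nat -> nat -> bool) (D : R) : Prop :=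
  (exists i, (i < n)%nat /\ deg n adj i = D) /\
  (forall i, (i < n)%nat -> deg n adj i <= D).

Definition is_max_ratio (n : nat) (adj : nat -> nat -> bool) (alpha N : R) : Prop :=
  (exists i j, (i < n)%nat /\ (j < n)%nat /\ adj i j = true /\
     Rpower (deg n adj j) alpha / Rpower (deg n adj i) alpha = N) /\
  (forall i j, (i < n)%nat -> (j < n)%nat -> adj i j = true ->
     Rpower (deg n adj j) alpha / Rpower (deg n adj i) alpha <= N).

Definition bidegreed (n : nat) (adj : nat -> nat -> bool) : Prop :=
  exists a b, a <> b /\
    (exists i, (i < n)%nat /\ deg n adj i = a) /\
    (exists j, (j < n)%nat /\ deg n adj j = b) /\
    (forall k, (k < n)%nat -> deg n adj k = a \/ deg n adj k = b).

From Stdlib Require Import Reals Lra Lia Relations.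
Open Scope R_scope.

(** Write [s_k = (^alpha m)_k + d_k] and let [theta] be the claimed bound for a
    fixed [i].  The proof is a Collatz-Wielandt argument: we exhibit a positive
    vector [v] with [Q v <= theta v] componentwise, namely
    [v_k = d_k^alpha (1 + p_k)] where [p_k = (s_k - s_i) / (theta - Delta + N)]
    for [k < i] and [p_k = 0] otherwise.  An exact row identity for [Q v]
    writes [theta v_k - (Q v)_k] as [d_k^alpha] times a sum of nonnegative
    slacks.  Since [Q] is nonnegative and positive on the edges of a connected
    graph, the spectral radius is at most [theta], with equality iff [Q v =
    theta v], i.e. iff every slack vanishes.  Vanishing slack means either that
    all [s_k] coincide, or that [s_k] is constant from [i] on and every vertex
    with [s_j > s_i] is an apex (dominating, of maximum degree, with maximal
    ratios into it); a combinatorial analysis identifies the latter graphs with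
    the extremal families of the statement. *)

Lemma sumR_ext (f g : nat -> R) n :
  (forall j, (j < n)%nat -> f j = g j) -> sumR f n = sumR g n.
Proof.
  induction n as [|n IH]; intros H; simpl; [reflexivity|].
  rewrite IH by (intros; apply H; lia). rewrite H by lia. reflexivity.
Qed.

Lemma sumR_plus (f g : nat -> R) n : sumR (fun j => f j + g j) n = sumR f n + sumR g n.
Proof. induction n as [|n IH]; simpl; [lra|]. rewrite IH. lra. Qed.

Lemma sumR_minus (f g : nat -> R) n : sumR (fun j => f j - g j) n = sumR f n - sumR g n.
Proof. induction n as [|n IH]; simpl; [lra|]. rewrite IH. lra. Qed.

Lemma sumR_scal (c : R) (f : nat -> R) n : sumR (fun j => c * f j) n = c * sumR f n.
Proof. induction n as [|n IH]; simpl; [lra|]. rewrite IH. lra. Qed.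

Lemma sumR_zero n : sumR (fun _ => 0) n = 0.
Proof. induction n as [|n IH]; simpl; [lra|]. rewrite IH. lra. Qed.

Lemma sumR_const c n : sumR (fun _ => c) n = c * INR n.
Proof. induction n as [|n IH]; simpl sumR; [simpl; lra|]. rewrite IH, S_INR. lra. Qed.

Lemma sumR_le (f g : nat -> R) n :
  (forall j, (j < n)%nat -> f j <= g j) -> sumR f n <= sumR g n.
Proof.
  induction n as [|n IH]; intros H; simpl; [lra|].
  assert (f n <= g n) by (apply H; lia).
  assert (sumR f n <= sumR g n) by (apply IH; intros; apply H; lia). lra.
Qed.

Lemma sumR_nonneg (f : nat -> R) n :
  (forall j, (j < n)%nat -> 0 <= f j) -> 0 <= sumR f n.
Proof. intros H. rewrite <- (sumR_zero n). now apply sumR_le. Qed.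

Lemma sumR_ge_term (f : nat -> R) n k :
  (forall j, (j < n)%nat -> 0 <= f j) -> (k < n)%nat -> f k <= sumR f n.
Proof.
  induction n as [|n IH]; intros H Hk; simpl; [lia|].
  assert (0 <= f n) by (apply H; lia).
  assert (0 <= sumR f n) by (apply sumR_nonneg; intros; apply H; lia).
  destruct (Nat.eq_dec k n) as [->|]; [lra|].
  assert (f k <= sumR f n) by (apply IH; [intros; apply H; lia|lia]). lra.
Qed.

Lemma sumR_eq0 (f : nat -> R) n :
  (forall j, (j < n)%nat -> 0 <= f j) -> sumR f n = 0 ->
  forall j, (j < n)%nat -> f j = 0.
Proof.
  intros H E j Hj.
  pose proof (sumR_ge_term f n j H Hj). pose proof (H j Hj). lra.
Qed.

Lemma sumR_delta (f : nat -> R) n k :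
  (k < n)%nat -> sumR (fun j => if Nat.eqb k j then f j else 0) n = f k.
Proof.
  induction n as [|n IH]; simpl; intros Hk; [lia|].
  destruct (Nat.eq_dec k n) as [->|].
  - rewrite Nat.eqb_refl, (sumR_ext _ (fun _ => 0)), sumR_zero; [lra|].
    intros j Hj. destruct (Nat.eqb_spec n j); [lia|reflexivity].
  - destruct (Nat.eqb_spec k n); [lia|]. rewrite IH by lia. lra.
Qed.

Lemma sumR_trunc (f : nat -> R) i n :
  (i <= n)%nat -> (forall j, (i <= j < n)%nat -> f j = 0) -> sumR f n = sumR f i.
Proof.
  induction n as [|n IH]; intros Hi H.
  - replace i with 0%nat by lia. reflexivity.
  - destruct (Nat.eq_dec i (S n)) as [->|]; [reflexivity|]. simpl.
    rewrite IH by (lia || (intros; apply H; lia)). rewrite (H n) by lia. lra.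
Qed.

Lemma sumR_abs (f : nat -> R) n : Rabs (sumR f n) <= sumR (fun j => Rabs (f j)) n.
Proof.
  induction n as [|n IH]; simpl.
  - rewrite Rabs_R0; lra.
  - eapply Rle_trans; [apply Rabs_triang|]. lra.
Qed.

Lemma argmax_exists (z : nat -> R) n :
  (0 < n)%nat -> exists p, (p < n)%nat /\ forall j, (j < n)%nat -> z j <= z p.
Proof.
  induction n as [|n IH]; intros Hn; [lia|].
  destruct (Nat.eq_dec n 0) as [->|].
  { exists 0%nat. split; [lia|]. intros j Hj. replace j with 0%nat by lia. lra. }
  destruct IH as [p [Hp H]]; [lia|].
  destruct (Rle_dec (z n) (z p)).
  - exists p. split; [lia|]. intros j Hj.
    destruct (Nat.eq_dec j n) as [->|]; [lra|]. apply H; lia.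
  - exists n. split; [lia|]. intros j Hj.
    destruct (Nat.eq_dec j n) as [->|]; [lra|].
    assert (z j <= z p) by (apply H; lia). lra.
Qed.
(** * Positive supervectors of nonnegative matrices

   If [M] is entrywise nonnegative and [v > 0] satisfies [M v <= theta v],
   then every (real) eigenvalue of [M] has modulus at most [theta]; if moreover
   [M] is positive along the edges of a connected graph, an eigenvalue of
   modulus [theta] forces [M v = theta v].  The proof compares an eigenvector
   [x] with [v] at an index maximising [|x_j / v_j|]. *)

Section Supervector.

Variables (n : nat) (M : nat -> nat -> R) (v : nat -> R) (theta : R).
Hypothesis M_nonneg : forall k j, (k < n)%nat -> (j < n)%nat -> 0 <= M k j.
Hypothesis v_pos : forall k, (k < n)%nat -> 0 < v k.
Hypothesis v_super : forall k, (k < n)%nat -> sumR (fun j => M k j * v j) n <= theta * v k.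

Section Eigenvector.

Variables (x : nat -> R) (lam : R).
Hypothesis x_eigen : forall k, (k < n)%nat -> sumR (fun j => M k j * x j) n = lam * x k.

Let r j := Rabs (x j / v j).

Lemma abs_x_ratio k : (k < n)%nat -> Rabs (x k) = r k * v k.
Proof.
  intros Hk. pose proof (v_pos k Hk). unfold r, Rdiv.
  rewrite Rabs_mult, Rabs_inv, (Rabs_pos_eq (v k)) by lra. field. lra.
Qed.

Lemma eigen_row_estimate (Z : R) q :
  (forall j, (j < n)%nat -> r j <= Z) -> (q < n)%nat ->
  Rabs lam * Rabs (x q) <= sumR (fun j => M q j * v j * r j) n /\
  sumR (fun j => M q j * v j * r j) n <= Z * sumR (fun j => M q j * v j) n.
Proof.
  intros HZ Hq. split.
  - rewrite <- Rabs_mult, <- (x_eigen q Hq).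
    eapply Rle_trans; [apply sumR_abs|]. apply Req_le, sumR_ext. intros j Hj.
    rewrite Rabs_mult, (Rabs_pos_eq (M q j)), abs_x_ratio by auto. ring.
  - rewrite <- sumR_scal. apply sumR_le. intros j Hj.
    pose proof (M_nonneg q j Hq Hj). pose proof (v_pos j Hj). pose proof (HZ j Hj).
    assert (0 <= M q j * v j) by (apply Rmult_le_pos; lra). nra.
Qed.

Hypothesis x_nonzero : exists k, (k < n)%nat /\ x k <> 0.

Lemma max_ratio_exists :
  exists p, (p < n)%nat /\ 0 < r p /\ forall j, (j < n)%nat -> r j <= r p.
Proof.
  destruct x_nonzero as [k0 [Hk0 Hx0]].
  destruct (argmax_exists r n) as [p [Hp Hmax]]; [lia|].
  exists p. repeat split; auto.
  pose proof (Hmax k0 Hk0). pose proof (abs_x_ratio k0 Hk0).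
  pose proof (Rabs_pos_lt _ Hx0). pose proof (v_pos k0 Hk0).
  assert (0 < r k0) by nra. lra.
Qed.

Lemma eigenvalue_abs_le : Rabs lam <= theta.
Proof.
  destruct max_ratio_exists as [p [Hp [HZ Hmax]]].
  destruct (eigen_row_estimate (r p) p Hmax Hp) as [C1 C2].
  rewrite abs_x_ratio in C1 by exact Hp.
  pose proof (v_super p Hp). pose proof (v_pos p Hp).
  assert (Rabs lam * (r p * v p) <= theta * (r p * v p)) by nra.
  assert (0 < r p * v p) by nra. nra.
Qed.

Lemma maximal_ratio_spreads q :
  Rabs lam = theta -> (q < n)%nat ->
  (forall j, (j < n)%nat -> r j <= r q) ->
  sumR (fun j => M q j * v j) n = theta * v q /\
  forall j, (j < n)%nat -> 0 < M q j -> r j = r q.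
Proof.
  intros Hl Hq Hmax.
  destruct (eigen_row_estimate (r q) q Hmax Hq) as [C1 C2].
  rewrite abs_x_ratio, Hl in C1 by exact Hq.
  destruct max_ratio_exists as [p [Hp [HZp Hmaxp]]].
  assert (HZ : 0 < r q) by (pose proof (Hmax p Hp); lra).
  pose proof (v_super q Hq). pose proof (v_pos q Hq).
  assert (Tight : sumR (fun j => M q j * v j) n = theta * v q) by nra.
  split; [exact Tight|].
  assert (Zero : sumR (fun j => M q j * v j * (r q - r j)) n = 0).
  { rewrite (sumR_ext _ (fun j => r q * (M q j * v j) - M q j * v j * r j)) by (intros; ring).
    rewrite sumR_minus, sumR_scal. nra. }
  intros j Hj HMj.
  assert (Term : M q j * v j * (r q - r j) = 0).
  { apply (sumR_eq0 (fun j => M q j * v j * (r q - r j)) n); auto.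
    intros j' Hj'. pose proof (M_nonneg q j' Hq Hj'). pose proof (v_pos j' Hj').
    pose proof (Hmax j' Hj'). apply Rmult_le_pos; [apply Rmult_le_pos|]; lra. }
  pose proof (v_pos j Hj).
  apply Rmult_integral in Term as [Term|Term]; [|lra].
  assert (0 < M q j * v j) by nra. lra.
Qed.

End Eigenvector.

Lemma eigenvalue_le_supervector lam : eigenvalue n M lam -> Rabs lam <= theta.
Proof. intros [x [Hx He]]. exact (eigenvalue_abs_le x lam He Hx). Qed.

Lemma supervector_tight (adj : nat -> nat -> bool) lam :
  connected n adj ->
  (forall k j, (k < n)%nat -> (j < n)%nat -> adj k j = true -> 0 < M k j) ->
  eigenvalue n M lam -> Rabs lam = theta ->
  forall k, (k < n)%nat -> sumR (fun j => M k j * v j) n = theta * v k.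
Proof.
  intros Hconn Hedge [x [Hx He]] Hl.
  destruct (max_ratio_exists x Hx) as [p [Hp [_ Hmax]]].
  set (r := fun j => Rabs (x j / v j)) in *.
  (* the maximal ratio propagates along the edges of the graph *)
  assert (Spread : forall a b, clos_refl_trans nat (edge_rel n adj) a b ->
            (a < n)%nat -> r a = r p -> (b < n)%nat /\ r b = r p).
  { intros a b Hab. induction Hab as [a b [Ha [Hb Eab]]| a | a b c _ IH1 _ IH2];
      intros Han Hra; auto.
    - assert (Ha_max : forall j, (j < n)%nat -> r j <= r a).
      { intros j Hj. rewrite Hra. apply Hmax; auto. }
      split; [exact Hb|]. rewrite <- Hra.
      exact (proj2 (maximal_ratio_spreads x lam He Hx a Hl Han Ha_max) b Hb (Hedge a b Ha Hb Eab)).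
    - destruct (IH1 Han Hra). apply IH2; auto. }
  intros k Hk. destruct (Spread p k (Hconn p k Hp Hk) Hp eq_refl) as [_ Hk'].
  apply (maximal_ratio_spreads x lam He Hx k Hl Hk).
  intros j Hj. unfold r in Hk'. rewrite Hk'. apply Hmax; auto.
Qed.

End Supervector.

Lemma indicator_bounds (b : bool) : 0 <= (if b then 1 else 0) <= 1.
Proof. destruct b; lra. Qed.

Lemma deg_nonneg n adj k : 0 <= deg n adj k.
Proof. apply sumR_nonneg. intros j _. apply indicator_bounds. Qed.

Lemma count_others n k :
  (k < n)%nat -> sumR (fun j => if Nat.eqb k j then 0 else 1) n = INR n - 1.
Proof.
  intros Hk. rewrite (sumR_ext _ (fun j => 1 - (if Nat.eqb k j then 1 else 0))).
  - rewrite sumR_minus, sumR_const, (sumR_delta (fun _ => 1)) by exact Hk. lra.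
  - intros j _. destruct (Nat.eqb k j); lra.
Qed.

Section Degrees.

Variables (n : nat) (adj : nat -> nat -> bool).
Hypothesis Hsimple : simple_graph n adj.

(* In a loopless graph the degree of [k] is a sum dominated termwise by the
   count of the other vertices; it equals [n - 1] iff [k] sees all of them. *)
Lemma deg_gap k :
  (k < n)%nat ->
  forall j, (j < n)%nat ->
  0 <= (if Nat.eqb k j then 0 else 1) - (if adj k j then 1 else 0).
Proof.
  intros Hk j Hj. destruct (Nat.eqb_spec k j) as [->|].
  - rewrite (proj2 Hsimple j Hj). lra.
  - destruct (adj k j); lra.
Qed.

Lemma deg_le_order k : (k < n)%nat -> deg n adj k <= INR n - 1.
Proof.
  intros Hk. rewrite <- (count_others n k Hk).
  pose proof (sumR_nonneg _ n (deg_gap k Hk)) as H.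
  rewrite sumR_minus in H. unfold deg. lra.
Qed.

Lemma deg_full_iff k :
  (k < n)%nat ->
  deg n adj k = INR n - 1 <-> forall j, (j < n)%nat -> j <> k -> adj j k = true.
Proof.
  intros Hk. rewrite <- (count_others n k Hk). split.
  - intros Hd j Hj Hjk.
    assert (E : sumR (fun j => (if Nat.eqb k j then 0 else 1) - (if adj k j then 1 else 0)) n = 0)
      by (rewrite sumR_minus; unfold deg in Hd; lra).
    pose proof (sumR_eq0 _ n (deg_gap k Hk) E j Hj) as Z. simpl in Z.
    rewrite (proj1 Hsimple j k Hj Hk).
    destruct (Nat.eqb_spec k j); [lia|]. destruct (adj k j); [reflexivity|lra].
  - intros H. apply sumR_ext. intros j Hj. destruct (Nat.eqb_spec k j) as [->|].
    + rewrite (proj2 Hsimple j Hj). reflexivity.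
    + rewrite (proj1 Hsimple k j Hk Hj), H by auto. reflexivity.
Qed.

Lemma deg_ge1 k : (2 <= n)%nat -> connected n adj -> (k < n)%nat -> 1 <= deg n adj k.
Proof.
  intros Hn Hc Hk.
  set (j := if Nat.eqb k 0 then 1%nat else 0%nat).
  assert (Hj : (j < n)%nat) by (unfold j; destruct (Nat.eqb k 0); lia).
  assert (Hjk : j <> k) by (unfold j; destruct (Nat.eqb_spec k 0); lia).
  assert (Hstep : exists z, edge_rel n adj k z).
  { clearbody j. destruct (clos_rt_rt1n _ _ _ _ (Hc k j Hk Hj)) as [|? z ? Hkz]; eauto.
    congruence. }
  destruct Hstep as [z [_ [Hz Hkz]]].
  unfold deg. eapply Rle_trans; [|apply (sumR_ge_term _ n z)]; auto.
  - simpl. rewrite Hkz. lra.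
  - intros; apply indicator_bounds.
Qed.

End Degrees.

Lemma Rpower_pos x a : 0 < Rpower x a.
Proof. apply exp_pos. Qed.

Lemma Rpower_zero x : Rpower x 0 = 1.
Proof. unfold Rpower. rewrite Rmult_0_l. apply exp_0. Qed.

Lemma Rpower_inj x y a : a <> 0 -> 0 < x -> 0 < y -> Rpower x a = Rpower y a -> x = y.
Proof.
  intros Ha Hx Hy E. apply ln_inv; auto.
  apply (f_equal ln) in E. rewrite !ln_Rpower in E.
  now apply Rmult_eq_reg_l with a.
Qed.

Lemma Rpower_antitone x y a : a <= 0 -> 0 < y -> y <= x -> Rpower x a <= Rpower y a.
Proof.
  intros Ha Hy Hxy. replace a with (- - a) by ring.
  rewrite (Rpower_Ropp x (- a)), (Rpower_Ropp y (- a)).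
  apply Rinv_le_contravar; [apply Rpower_pos|]. apply Rle_Rpower_l; lra.
Qed.

Definition sdeg (n : nat) (adj : nat -> nat -> bool) (alpha : R) (k : nat) : R :=
  gen_avg_deg n adj alpha k + deg n adj k.

Definition ratio (n : nat) (adj : nat -> nat -> bool) (alpha : R) (k j : nat) : R :=
  Rpower (deg n adj j) alpha / Rpower (deg n adj k) alpha.

Lemma ratio_pos n adj alpha k j : 0 < ratio n adj alpha k j.
Proof. apply Rdiv_lt_0_compat; apply Rpower_pos. Qed.

Lemma gen_avg_mul n adj a k :
  gen_avg_deg n adj a k * Rpower (deg n adj k) a =
  sumR (fun j => if adj k j then Rpower (deg n adj j) a else 0) n.
Proof. unfold gen_avg_deg. field. pose proof (Rpower_pos (deg n adj k) a). lra. Qed.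

Lemma gen_avg_nonneg n adj a k : 0 <= gen_avg_deg n adj a k.
Proof.
  apply Rmult_le_pos.
  - apply sumR_nonneg. intros j _. destruct (adj k j); [left; apply Rpower_pos|lra].
  - left. apply Rinv_0_lt_compat, Rpower_pos.
Qed.

Lemma sdeg_alpha0 n adj k : sdeg n adj 0 k = 2 * deg n adj k.
Proof.
  unfold sdeg, gen_avg_deg, deg. rewrite Rpower_zero.
  rewrite (sumR_ext _ (fun j => if adj k j then 1 else 0)); [field|].
  intros j _. rewrite Rpower_zero. reflexivity.
Qed.

Lemma sdeg_regular n adj a k D :
  (k < n)%nat -> (forall j, (j < n)%nat -> deg n adj j = D) -> sdeg n adj a k = 2 * D.
Proof.
  intros Hk H. unfold sdeg, gen_avg_deg.
  rewrite (sumR_ext _ (fun j => Rpower D a * (if adj k j then 1 else 0))).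
  - rewrite sumR_scal. fold (deg n adj k). rewrite H by exact Hk.
    field. pose proof (Rpower_pos D a). lra.
  - intros j Hj. rewrite H by exact Hj. destruct (adj k j); ring.
Qed.

(** * Rows of the signless Laplacian on a weighted test vector

   For a perturbation [p], the test vector [v_j = d_j^alpha (1 + p_j)]
   satisfies [(Q v)_k = d_k^alpha (s_k + d_k p_k + sum_(j ~ k) (d_j/d_k)^alpha p_j)].
   Bounding [d_k <= Delta] and the ratios by [N] gives the estimate
   [s_k + (Delta - N) p_k + N sum_j p_j]; the [defect] is the loss in it. *)

Lemma signless_laplacian_nonneg n adj k j : 0 <= signless_laplacian n adj k j.
Proof.
  unfold signless_laplacian. pose proof (deg_nonneg n adj k).
  destruct (Nat.eqb k j), (adj k j); lra.
Qed.

Lemma signless_laplacian_edge_pos n adj k j :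
  adj k j = true -> 0 < signless_laplacian n adj k j.
Proof.
  intros E. unfold signless_laplacian. rewrite E. pose proof (deg_nonneg n adj k).
  destruct (Nat.eqb k j); lra.
Qed.

Definition nbr_ratio (n : nat) (adj : nat -> nat -> bool) (alpha : R) (k j : nat) : R :=
  if adj k j then ratio n adj alpha k j else 0.

Definition defect (n : nat) (adj : nat -> nat -> bool) (alpha Delta N : R)
    (p : nat -> R) (k : nat) : R :=
  (Delta - deg n adj k) * p k +
  sumR (fun j => if Nat.eqb k j then 0 else (N - nbr_ratio n adj alpha k j) * p j) n.

Lemma row_exact n adj alpha (p : nat -> R) k :
  (k < n)%nat ->
  sumR (fun j => signless_laplacian n adj k j * (Rpower (deg n adj j) alpha * (1 + p j))) n =
  Rpower (deg n adj k) alpha *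
    (sdeg n adj alpha k + deg n adj k * p k + sumR (fun j => nbr_ratio n adj alpha k j * p j) n).
Proof.
  intros Hk. unfold signless_laplacian, sdeg.
  pose proof (Rpower_pos (deg n adj k) alpha) as Hdk.
  rewrite (sumR_ext _ (fun j =>
      (if Nat.eqb k j then deg n adj k * (Rpower (deg n adj j) alpha * (1 + p j)) else 0)
      + ((if adj k j then Rpower (deg n adj j) alpha else 0)
      + Rpower (deg n adj k) alpha * (nbr_ratio n adj alpha k j * p j))))
    by (intros j _; unfold nbr_ratio, ratio;
        destruct (Nat.eqb k j), (adj k j); field; lra).
  rewrite !sumR_plus, sumR_scal.
  rewrite (sumR_delta (fun j => deg n adj k * (Rpower (deg n adj j) alpha * (1 + p j))))
    by exact Hk.
  rewrite <- gen_avg_mul. ring.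
Qed.

Lemma row_identity n adj alpha Delta N (p : nat -> R) k :
  simple_graph n adj -> (k < n)%nat ->
  sumR (fun j => signless_laplacian n adj k j * (Rpower (deg n adj j) alpha * (1 + p j))) n =
  Rpower (deg n adj k) alpha *
    (sdeg n adj alpha k + (Delta - N) * p k + N * sumR p n - defect n adj alpha Delta N p k).
Proof.
  intros Hsimple Hk. rewrite row_exact by exact Hk. unfold defect.
  rewrite (sumR_ext
      (fun j => if Nat.eqb k j then 0 else (N - nbr_ratio n adj alpha k j) * p j)
      (fun j => N * p j - (if Nat.eqb k j then N * p j else 0) - nbr_ratio n adj alpha k j * p j)).
  - rewrite !sumR_minus, sumR_scal, (sumR_delta (fun j => N * p j)) by exact Hk. ring.
  - intros j Hj. unfold nbr_ratio. destruct (Nat.eqb_spec k j) as [->|].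
    + rewrite (proj2 Hsimple j Hj). ring.
    + ring.
Qed.

Lemma larger_root (a b P th : R) :
  0 <= P -> th = (a + b + sqrt ((a - b) ^ 2 + 4 * P)) / 2 ->
  (th - a) * (th - b) = P /\ a <= th /\ b <= th /\
  (0 < P -> b < th) /\ (P = 0 -> b < a -> th = a).
Proof.
  intros HP Hth.
  set (r := sqrt ((a - b) ^ 2 + 4 * P)) in Hth.
  assert (Hr : 0 <= r) by apply sqrt_pos.
  assert (Hrr : r * r = (a - b) * (a - b) + 4 * P).
  { unfold r. rewrite sqrt_sqrt; [ring|]. pose proof (pow2_ge_0 (a - b)). lra. }
  assert (Hab : a - b <= r) by nra.
  assert (Hba : b - a <= r) by nra.
  subst th. split; [|split; [lra|split; [lra|split]]].
  - nra.
  - intros HPpos. destruct (Rlt_or_le (b - a) r) as [Hlt|Hle]; [lra|].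
    assert (r * r <= (b - a) * (b - a)) by (apply Rmult_le_compat; lra). nra.
  - intros HP0 Hlt.
    assert (E : (r - (a - b)) * (r + (a - b)) = 0) by (subst P; nra).
    apply Rmult_integral in E as [E|E]; lra.
Qed.

(** * The test vector behind the bound

   Fix [i].  With [T = sum_(k < i) (s_k - s_i)] the bound [theta] is the
   larger root of [(x - s_i)(x - Delta + N) = N T].  Put [c = theta - Delta + N]
   and perturb the weights [d_k^alpha] by [p_k = (s_k - s_i) / c] for [k < i]
   ([p_k = 0] otherwise).  Then [theta (1 + p_k) = max(s_k, s_i) + (Delta - N) p_k
   + N sum_j p_j + g] with a gap [g >= 0], so by [row_identity] the vector
   [v_k = d_k^alpha (1 + p_k)] satisfies [(Q v)_k = theta v_k - d_k^alpha sigma_k]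
   with a total slack [sigma_k >= 0].  The supervector lemmas then bound the
   spectral radius by [theta], with equality iff every [sigma_k] vanishes. *)

(* The ordering hypothesis compares consecutive vertices; it makes [s]
   nonincreasing on all of [0, n). *)
Lemma antitone_of_step (f : nat -> R) n :
  (forall k, (S k < n)%nat -> f k >= f (S k)) ->
  forall a b, (a <= b < n)%nat -> f b <= f a.
Proof.
  intros Hstep a b Hab. induction b as [|b IH].
  - replace a with 0%nat by lia. lra.
  - destruct (Nat.eq_dec a (S b)) as [->|]; [lra|].
    pose proof (Hstep b ltac:(lia)). pose proof (IH ltac:(lia)). lra.
Qed.

Definition apex (n : nat) (adj : nat -> nat -> bool) (alpha Delta N : R) (j : nat)
    : Prop :=
  deg n adj j = Delta /\
  forall k, (k < n)%nat -> k <> j -> adj k j = true /\ ratio n adj alpha k j = N.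

Section Bound.

Variables (n : nat) (adj : nat -> nat -> bool) (alpha Delta N : R).
Hypothesis Hsimple : simple_graph n adj.
Hypothesis HDelta : is_max_degree n adj Delta.
Hypothesis HN : is_max_ratio n adj alpha N.

Let s := sdeg n adj alpha.
Hypothesis s_antitone : forall a b, (a <= b < n)%nat -> s b <= s a.

Variable i : nat.
Hypothesis Hi : (i < n)%nat.

Lemma N_pos : 0 < N.
Proof. destruct HN as [[a [b [_ [_ [_ <-]]]]] _]. apply ratio_pos. Qed.

Lemma nbr_ratio_le k j : (k < n)%nat -> (j < n)%nat -> nbr_ratio n adj alpha k j <= N.
Proof.
  intros Hk Hj. pose proof N_pos. unfold nbr_ratio.
  destruct (adj k j) eqn:E; [apply HN|]; auto; lra.
Qed.

Definition excess : R := sumR (fun k => s k - s i) i.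

Definition theta : R :=
  (s i + Delta - N + sqrt ((s i - Delta + N) ^ 2 + 4 * N * excess)) / 2.

Definition shift : R := theta - (Delta - N).

Definition perturb (k : nat) : R := if (k <? i)%nat then (s k - s i) / shift else 0.

Definition gap : R := theta - s i - N * sumR perturb n.

Definition test_vector (k : nat) : R := Rpower (deg n adj k) alpha * (1 + perturb k).

Definition total_slack (k : nat) : R :=
  defect n adj alpha Delta N perturb k + (Rmax (s k) (s i) - s k) + gap.

Lemma head_ge k : (k < i)%nat -> s i <= s k.
Proof. intros Hk. apply s_antitone. lia. Qed.

Lemma excess_nonneg : 0 <= excess.
Proof. apply sumR_nonneg. intros k Hk. pose proof (head_ge k Hk). lra. Qed.

Lemma excess_zero : excess = 0 -> forall k, (k < i)%nat -> s k = s i.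
Proof.
  intros E k Hk.
  assert (Hs : forall j, (j < i)%nat -> 0 <= s j - s i)
    by (intros j Hj; pose proof (head_ge j Hj); lra).
  pose proof (sumR_eq0 _ i Hs E k Hk). lra.
Qed.

Lemma excess_ge_term k : (k < i)%nat -> s k - s i <= excess.
Proof.
  intros Hk. apply (sumR_ge_term (fun k => s k - s i)); [|exact Hk].
  intros j Hj. pose proof (head_ge j Hj). lra.
Qed.

Lemma excess_pos_iff : 0 < excess <-> s i < s 0%nat.
Proof.
  split.
  - intros Hpos. destruct (Rlt_or_le (s i) (s 0%nat)) as [|Hle]; [assumption|].
    assert (excess = 0); [|lra].
    unfold excess. rewrite (sumR_ext _ (fun _ => 0)), sumR_zero; [reflexivity|].
    intros k Hk. pose proof (head_ge k Hk). assert (s k <= s 0%nat) by (apply s_antitone; lia).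
    lra.
  - intros Hlt. assert (Hi0 : (0 < i)%nat).
    { destruct (Nat.eq_dec i 0) as [E|]; [rewrite E in Hlt; lra|lia]. }
    pose proof (excess_ge_term 0%nat Hi0). lra.
Qed.

Lemma theta_root :
  (theta - s i) * shift = N * excess /\ s i <= theta /\ 0 <= shift /\
  (0 < excess -> 0 < shift) /\ (excess = 0 -> Delta - N < s i -> theta = s i).
Proof.
  pose proof N_pos. pose proof excess_nonneg.
  destruct (larger_root (s i) (Delta - N) (N * excess) theta) as [E [Ha [Hb [Hpos Hzero]]]].
  - apply Rmult_le_pos; lra.
  - unfold theta. do 2 f_equal.
    + ring.
    + f_equal. f_equal; ring.
  - unfold shift. repeat split; try lra.
    + intros P. assert (NP : 0 < N * excess) by (apply Rmult_lt_0_compat; lra).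
      specialize (Hpos NP). lra.
    + intros P Hlt. apply Hzero; [rewrite P; ring|exact Hlt].
Qed.

Lemma shift_perturb k : (k < i)%nat -> shift * perturb k = s k - s i.
Proof.
  intros Hk. unfold perturb. destruct (Nat.ltb_spec k i) as [_|]; [|lia].
  destruct (Rle_lt_or_eq_dec _ _ excess_nonneg) as [P|Z].
  - destruct theta_root as [_ [_ [_ [Hshift _]]]]. specialize (Hshift P).
    field. lra.
  - rewrite (excess_zero (eq_sym Z) k Hk). unfold Rdiv. ring.
Qed.

Lemma perturb_nonneg k : 0 <= perturb k.
Proof.
  unfold perturb. destruct (Nat.ltb_spec k i) as [Hk|]; [|lra].
  destruct (Rle_lt_or_eq_dec _ _ excess_nonneg) as [P|Z].
  - destruct theta_root as [_ [_ [_ [Hshift _]]]]. specialize (Hshift P).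
    pose proof (head_ge k Hk). unfold Rdiv.
    apply Rmult_le_pos; [lra|left; apply Rinv_0_lt_compat; lra].
  - rewrite (excess_zero (eq_sym Z) k Hk). unfold Rdiv. lra.
Qed.

Lemma perturb_pos_iff k : (k < n)%nat -> 0 < perturb k <-> s i < s k.
Proof.
  intros Hk. split.
  - intros P. unfold perturb in P. destruct (Nat.ltb_spec k i) as [Hki|]; [|lra].
    destruct (Rle_lt_or_eq_dec _ _ (head_ge k Hki)) as [|E]; [assumption|].
    rewrite E, Rminus_diag in P. unfold Rdiv in P. lra.
  - intros Hlt. assert (Hki : (k < i)%nat).
    { destruct (Nat.lt_ge_cases k i) as [|Hge]; [assumption|].
      pose proof (s_antitone i k ltac:(lia)). lra. }
    pose proof (excess_ge_term k Hki).
    destruct theta_root as [_ [_ [_ [Hshift _]]]].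
    assert (Hsh : 0 < shift) by (apply Hshift; lra).
    pose proof (shift_perturb k Hki). nra.
Qed.

Lemma perturb_zero : excess = 0 -> forall k, perturb k = 0.
Proof.
  intros Z k. unfold perturb. destruct (Nat.ltb_spec k i) as [Hk|]; [|reflexivity].
  rewrite (excess_zero Z k Hk), Rminus_diag. unfold Rdiv. ring.
Qed.

Lemma shift_sum : shift * sumR perturb n = excess.
Proof.
  rewrite (sumR_trunc perturb i n) by
    (lia || (intros j Hj; unfold perturb; destruct (Nat.ltb_spec j i); [lia|reflexivity])).
  rewrite <- sumR_scal. apply sumR_ext. apply shift_perturb.
Qed.

Lemma gap_facts : 0 <= gap /\ (0 < excess -> gap = 0).
Proof.
  destruct theta_root as [Hroot [Hsi [_ [Hshift _]]]].
  assert (Hgs : gap * shift = 0).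
  { unfold gap. rewrite Rmult_minus_distr_r, Hroot, Rmult_assoc, (Rmult_comm _ shift), shift_sum.
    ring. }
  destruct (Rle_lt_or_eq_dec _ _ excess_nonneg) as [P|Z].
  - specialize (Hshift P). assert (gap = 0) by nra. lra.
  - assert (gap = theta - s i); [|lra].
    unfold gap. rewrite (sumR_ext _ (fun _ => 0)), sumR_zero by
      (intros; apply perturb_zero; auto). ring.
Qed.

Lemma theta_level k :
  (k < n)%nat ->
  theta * (1 + perturb k) =
  Rmax (s k) (s i) + (Delta - N) * perturb k + N * sumR perturb n + gap.
Proof.
  intros Hk. unfold gap.
  assert (shift * perturb k = Rmax (s k) (s i) - s i); [|unfold shift in *; lra].
  destruct (Nat.lt_ge_cases k i) as [Hki|Hki].
  - rewrite shift_perturb, Rmax_left by (auto; apply head_ge; auto). reflexivity.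
  - unfold perturb. destruct (Nat.ltb_spec k i); [lia|].
    rewrite Rmax_right by (apply s_antitone; lia). ring.
Qed.

Lemma defect_term_nonneg k :
  (k < n)%nat -> forall j, (j < n)%nat ->
  0 <= (if Nat.eqb k j then 0 else (N - nbr_ratio n adj alpha k j) * perturb j).
Proof.
  intros Hk j Hj. destruct (Nat.eqb k j); [lra|].
  pose proof (nbr_ratio_le k j Hk Hj). pose proof (perturb_nonneg j).
  apply Rmult_le_pos; lra.
Qed.

Lemma defect_nonneg k : (k < n)%nat -> 0 <= defect n adj alpha Delta N perturb k.
Proof.
  intros Hk. unfold defect.
  pose proof (proj2 HDelta k Hk). pose proof (perturb_nonneg k).
  pose proof (sumR_nonneg _ n (defect_term_nonneg k Hk)).
  assert (0 <= (Delta - deg n adj k) * perturb k) by (apply Rmult_le_pos; lra). lra.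
Qed.

Lemma defect_zero_iff k :
  (k < n)%nat ->
  defect n adj alpha Delta N perturb k = 0 <->
  (Delta - deg n adj k) * perturb k = 0 /\
  forall j, (j < n)%nat -> j <> k -> (N - nbr_ratio n adj alpha k j) * perturb j = 0.
Proof.
  intros Hk. unfold defect.
  pose proof (proj2 HDelta k Hk). pose proof (perturb_nonneg k).
  pose proof (sumR_nonneg _ n (defect_term_nonneg k Hk)).
  assert (0 <= (Delta - deg n adj k) * perturb k) by (apply Rmult_le_pos; lra).
  split.
  - intros Z. split; [lra|]. intros j Hj Hjk.
    pose proof (sumR_eq0 _ n (defect_term_nonneg k Hk) ltac:(lra) j Hj) as Zj.
    simpl in Zj. destruct (Nat.eqb_spec k j); [lia|exact Zj].
  - intros [Z1 Z2]. rewrite (sumR_ext _ (fun _ => 0)), sumR_zero; [lra|].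
    intros j Hj. destruct (Nat.eqb_spec k j); [reflexivity|]. apply Z2; auto.
Qed.

Lemma total_slack_zero_iff k :
  (k < n)%nat ->
  total_slack k = 0 <-> defect n adj alpha Delta N perturb k = 0 /\ s i <= s k /\ gap = 0.
Proof.
  intros Hk. unfold total_slack.
  pose proof (defect_nonneg k Hk). pose proof (proj1 gap_facts).
  pose proof (Rmax_l (s k) (s i)). pose proof (Rmax_r (s k) (s i)).
  split.
  - intros Z. repeat split; lra.
  - intros [D [Hle G]]. rewrite D, G, Rmax_left by exact Hle. ring.
Qed.

Lemma test_vector_pos k : (k < n)%nat -> 0 < test_vector k.
Proof.
  intros _. pose proof (perturb_nonneg k).
  apply Rmult_lt_0_compat; [apply Rpower_pos|lra].
Qed.

Lemma test_row k :
  (k < n)%nat ->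
  sumR (fun j => signless_laplacian n adj k j * test_vector j) n =
  theta * test_vector k - Rpower (deg n adj k) alpha * total_slack k.
Proof.
  intros Hk. unfold test_vector, total_slack.
  rewrite (row_identity n adj alpha Delta N perturb k Hsimple Hk).
  rewrite <- Rmult_assoc, (Rmult_comm theta), Rmult_assoc, theta_level by exact Hk.
  fold s. ring.
Qed.

Lemma test_row_le k :
  (k < n)%nat ->
  sumR (fun j => signless_laplacian n adj k j * test_vector j) n <= theta * test_vector k.
Proof.
  intros Hk. rewrite test_row by exact Hk.
  pose proof (Rpower_pos (deg n adj k) alpha). pose proof (defect_nonneg k Hk).
  pose proof (proj1 gap_facts). pose proof (Rmax_l (s k) (s i)).
  assert (0 <= total_slack k) by (unfold total_slack; lra). nra.
Qed.

Lemma spectral_radius_le_bound rho :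
  spectral_radius n (signless_laplacian n adj) rho -> rho <= theta.
Proof.
  intros [[lam [Hlam <-]] _].
  apply (eigenvalue_le_supervector n (signless_laplacian n adj) test_vector); auto.
  - intros; apply signless_laplacian_nonneg.
  - exact test_vector_pos.
  - exact test_row_le.
Qed.

(* Equality holds iff the test vector is an eigenvector, i.e. iff no slack. *)
Lemma spectral_radius_eq_bound_iff rho :
  connected n adj -> spectral_radius n (signless_laplacian n adj) rho ->
  rho = theta <-> forall k, (k < n)%nat -> total_slack k = 0.
Proof.
  intros Hconn Hrho. split.
  - intros E k Hk. destruct Hrho as [[lam [Hlam Habs]] _].
    pose proof (supervector_tight n (signless_laplacian n adj) test_vector theta
      (fun k j _ _ => signless_laplacian_nonneg n adj k j) test_vector_pos test_row_le
      adj lam Hconn (fun k j _ _ => signless_laplacian_edge_pos n adj k j)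
      Hlam ltac:(lra) k Hk) as Tight.
    rewrite test_row in Tight by exact Hk.
    pose proof (Rpower_pos (deg n adj k) alpha).
    assert (Prod : Rpower (deg n adj k) alpha * total_slack k = 0) by lra.
    apply Rmult_integral in Prod as [|]; lra.
  - intros Z. apply Rle_antisym; [apply spectral_radius_le_bound; exact Hrho|].
    destruct Hrho as [_ Hmax]. eapply Rle_trans; [apply Rle_abs|]. apply Hmax.
    exists test_vector. split.
    + exists i. split; [exact Hi|]. pose proof (test_vector_pos i Hi). lra.
    + intros k Hk. rewrite test_row, Z by exact Hk. ring.
Qed.

Lemma apex_of_slack_free j :
  (forall k, (k < n)%nat -> total_slack k = 0) ->
  (j < n)%nat -> s i < s j -> apex n adj alpha Delta N j.
Proof.
  intros Z Hj Hlt.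
  assert (Pj : 0 < perturb j) by (apply perturb_pos_iff; auto).
  assert (Dz : forall k, (k < n)%nat -> defect n adj alpha Delta N perturb k = 0)
    by (intros k Hk; apply (total_slack_zero_iff k Hk); auto).
  split.
  - destruct (proj1 (defect_zero_iff j Hj) (Dz j Hj)) as [Dj _].
    apply Rmult_integral in Dj as [Dj|Dj]; lra.
  - intros k Hk Hkj.
    destruct (proj1 (defect_zero_iff k Hk) (Dz k Hk)) as [_ Dk].
    specialize (Dk j Hj (not_eq_sym Hkj)).
    apply Rmult_integral in Dk as [Dk|Dk]; [|lra].
    pose proof N_pos. unfold nbr_ratio in Dk.
    destruct (adj k j); [split; [reflexivity|lra]|lra].
Qed.

Lemma slack_free_of_apexes :
  s i < s 0%nat -> (forall k, (i <= k < n)%nat -> s k = s i) ->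
  (forall j, (j < n)%nat -> s i < s j -> apex n adj alpha Delta N j) ->
  forall k, (k < n)%nat -> total_slack k = 0.
Proof.
  intros Hdrop Htail Hapex k Hk. apply total_slack_zero_iff; [exact Hk|].
  assert (Hsupp : forall j, (j < n)%nat -> perturb j = 0 \/ apex n adj alpha Delta N j).
  { intros j Hj. destruct (Rle_lt_or_eq_dec _ _ (perturb_nonneg j)) as [P|P]; [|auto].
    right. apply Hapex, perturb_pos_iff; auto. }
  repeat split.
  - apply defect_zero_iff; [exact Hk|]. split.
    + destruct (Hsupp k Hk) as [->|[Hd _]]; [ring|]. rewrite Hd. ring.
    + intros j Hj Hjk. destruct (Hsupp j Hj) as [->|[_ Ha]]; [ring|].
      destruct (Ha k Hk (not_eq_sym Hjk)) as [Eadj Er].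
      unfold nbr_ratio. rewrite Eadj, Er. ring.
  - destruct (Nat.lt_ge_cases k i) as [Hki|Hki]; [apply head_ge; auto|].
    rewrite (Htail k) by lia. lra.
  - apply gap_facts, excess_pos_iff. exact Hdrop.
Qed.

Lemma slack_free_of_constant :
  (forall k, (k < n)%nat -> s k = s 0%nat) ->
  forall k, (k < n)%nat -> total_slack k = 0.
Proof.
  intros Hconst k Hk.
  assert (Hsi : forall k, (k < n)%nat -> s k = s i)
    by (intros j Hj; rewrite (Hconst j Hj), (Hconst i Hi); reflexivity).
  assert (Z : excess = 0).
  { unfold excess. rewrite (sumR_ext _ (fun _ => 0)), sumR_zero; [reflexivity|].
    intros j Hj. rewrite Hsi by lia. ring. }
  assert (Htheta : theta = s i).
  { destruct theta_root as [_ [_ [_ [_ Hb]]]]. apply Hb; [exact Z|].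
    destruct HDelta as [[p [Hp Ep]] _]. rewrite <- (Hsi p Hp).
    unfold s, sdeg. rewrite Ep. pose proof (gen_avg_nonneg n adj alpha p). pose proof N_pos.
    lra. }
  assert (Hp0 := perturb_zero Z).
  apply total_slack_zero_iff; [exact Hk|]. repeat split.
  - apply defect_zero_iff; [exact Hk|]. split; [rewrite Hp0; ring|].
    intros j _ _. rewrite Hp0. ring.
  - rewrite (Hsi k Hk). lra.
  - unfold gap. rewrite Htheta, (sumR_ext _ (fun _ => 0)), sumR_zero by auto. ring.
Qed.

Lemma slack_free_iff :
  (forall k, (k < n)%nat -> total_slack k = 0) <->
  (forall k, (k < n)%nat -> s k = s 0%nat) \/
  (s i < s 0%nat /\ (forall k, (i <= k < n)%nat -> s k = s i) /\
   forall j, (j < n)%nat -> s i < s j -> apex n adj alpha Delta N j).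
Proof.
  split.
  - intros Z.
    assert (Hlevel : forall k, (k < n)%nat -> s i <= s k)
      by (intros k Hk; apply (total_slack_zero_iff k Hk); auto).
    assert (Htail : forall k, (i <= k < n)%nat -> s k = s i).
    { intros k Hk. pose proof (Hlevel k ltac:(lia)). pose proof (s_antitone i k Hk). lra. }
    destruct (Rlt_or_le (s i) (s 0%nat)) as [Hdrop|Hflat].
    + right. split; [exact Hdrop|split; [exact Htail|]].
      intros j Hj Hlt. apply apex_of_slack_free; auto.
    + left. intros k Hk. pose proof (Hlevel k Hk). pose proof (s_antitone 0%nat k ltac:(lia)).
      pose proof (Hlevel 0%nat ltac:(lia)). lra.
  - intros [Hconst|[Hdrop [Htail Hapex]]].
    + apply slack_free_of_constant. exact Hconst.
    + apply slack_free_of_apexes; auto.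
Qed.

End Bound.

(** * The extremal graphs *)

Definition dominating_prefix (n : nat) (adj : nat -> nat -> bool) (t : nat) : Prop :=
  bidegreed n adj /\
  (forall k, (k < t)%nat -> deg n adj k = INR n - 1) /\
  (forall k, (t <= k < n)%nat -> deg n adj k = deg n adj t) /\
  INR n - 1 > deg n adj t.

Definition dominating_star (n : nat) (adj : nat -> nat -> bool) (alpha : R) : Prop :=
  bidegreed n adj /\
  sdeg n adj alpha 0%nat > sdeg n adj alpha 1%nat /\
  (forall k, (1 <= k < n)%nat -> sdeg n adj alpha k = sdeg n adj alpha 1%nat) /\
  deg n adj 0%nat = INR n - 1 /\
  (forall k, (1 <= k < n)%nat -> deg n adj k = deg n adj 1%nat) /\
  INR n - 1 > deg n adj 1%nat.

Definition extremal (n : nat) (adj : nat -> nat -> bool) (alpha : R) (i : nat) : Prop :=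
  exists t, (1 <= t <= i)%nat /\
    ((alpha = 0 /\ dominating_prefix n adj t) \/ (alpha > 0 /\ dominating_star n adj alpha)).

Lemma threshold_index (f : nat -> R) i :
  (forall a b, (a <= b <= i)%nat -> f b <= f a) -> f i < f 0%nat ->
  exists t, (1 <= t <= i)%nat /\ (forall j, (j < t)%nat -> f i < f j) /\
            (forall j, (t <= j <= i)%nat -> f j = f i).
Proof.
  intros Hanti Hdrop.
  assert (Scan : forall m, (m <= i)%nat ->
            (forall j, (j < m)%nat -> f i < f j) \/
            exists t, (1 <= t <= i)%nat /\ (forall j, (j < t)%nat -> f i < f j) /\
                      (forall j, (t <= j <= i)%nat -> f j = f i)).
  { induction m as [|m IH]; intros Hmi; [left; intros; lia|].
    destruct (IH ltac:(lia)) as [Above|Found]; [|right; exact Found].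
    destruct (Rlt_dec (f i) (f m)) as [Lt|Nlt].
    - left. intros j Hj. destruct (Nat.eq_dec j m) as [->|]; auto. apply Above; lia.
    - right. exists m. assert (m <> 0%nat) by (intros ->; lra).
      split; [lia|]. split; [exact Above|]. intros j Hj.
      pose proof (Hanti m j ltac:(lia)). pose proof (Hanti j i ltac:(lia)). lra. }
  destruct (Scan i (le_n _)) as [Above|Found]; [|exact Found].
  exists i. assert (i <> 0%nat) by (intros E; rewrite E in Hdrop; lra).
  split; [lia|]. split; [exact Above|]. intros j Hj. replace j with i by lia. reflexivity.
Qed.

Lemma ratio_alpha0 n adj k j : ratio n adj 0 k j = 1.
Proof. unfold ratio. rewrite !Rpower_zero. field. Qed.

Section Extremal.

Variables (n : nat) (adj : nat -> nat -> bool) (alpha Delta N : R).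
Hypothesis Hn : (2 <= n)%nat.
Hypothesis Hsimple : simple_graph n adj.
Hypothesis Hconn : connected n adj.
Hypothesis HDelta : is_max_degree n adj Delta.
Hypothesis HN : is_max_ratio n adj alpha N.

Let s := sdeg n adj alpha.
Hypothesis s_antitone : forall a b, (a <= b < n)%nat -> s b <= s a.

Variable i : nat.
Hypothesis Hi : (i < n)%nat.

Lemma apex_dominating j : (j < n)%nat -> apex n adj alpha Delta N j -> deg n adj j = INR n - 1.
Proof. intros Hj [_ Ha]. apply deg_full_iff; auto. intros k Hk Hkj. apply Ha; auto. Qed.

Lemma Delta_dominating k : (k < n)%nat -> deg n adj k = INR n - 1 -> Delta = INR n - 1.
Proof.
  intros Hk Hd. destruct HDelta as [[p [Hp Ep]] Hle].
  pose proof (Hle k Hk). pose proof (deg_le_order n adj Hsimple p Hp). lra.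
Qed.

Lemma N_alpha0 : alpha = 0 -> N = 1.
Proof. intros A0. destruct HN as [[a [b [_ [_ [_ <-]]]]] _]. rewrite A0. apply ratio_alpha0. Qed.

Lemma bidegreed_of_split t :
  (0 < t < n)%nat -> (forall k, (k < t)%nat -> deg n adj k = INR n - 1) ->
  (forall k, (t <= k < n)%nat -> deg n adj k = deg n adj t) -> INR n - 1 > deg n adj t ->
  bidegreed n adj.
Proof.
  intros Ht Hlow Hhigh Hgt. exists (INR n - 1), (deg n adj t).
  split; [lra|]. split; [exists 0%nat; split; [lia|apply Hlow; lia]|].
  split; [exists t; split; [lia|reflexivity]|].
  intros k Hk. destruct (Nat.lt_ge_cases k t); [left; auto|right; apply Hhigh; lia].
Qed.

Lemma deg_pos k : (k < n)%nat -> 0 < deg n adj k.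
Proof. intros Hk. pose proof (deg_ge1 n adj k Hn Hconn Hk). lra. Qed.

Lemma prefix_of_apexes :
  alpha = 0 -> s i < s 0%nat -> (forall k, (i <= k < n)%nat -> s k = s i) ->
  (forall j, (j < n)%nat -> s i < s j -> apex n adj alpha Delta N j) ->
  exists t, (1 <= t <= i)%nat /\ dominating_prefix n adj t.
Proof.
  intros A0 Hdrop Htail Hapex.
  destruct (threshold_index s i) as [t [Ht [Habove Hat]]]; [|exact Hdrop|].
  { intros a b Hab. apply s_antitone. lia. }
  assert (Hs2 : forall k, s k = 2 * deg n adj k)
    by (intros k; unfold s; rewrite A0; apply sdeg_alpha0).
  assert (Hlow : forall k, (k < t)%nat -> deg n adj k = INR n - 1)
    by (intros k Hk; apply apex_dominating, Hapex, Habove; auto; lia).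
  assert (Hst : forall k, (t <= k < n)%nat -> s k = s i).
  { intros k Hk. destruct (Nat.le_gt_cases k i); [apply Hat|apply Htail]; lia. }
  assert (Hhigh : forall k, (t <= k < n)%nat -> deg n adj k = deg n adj t).
  { intros k Hk. pose proof (Hst k Hk). pose proof (Hst t ltac:(lia)).
    rewrite !Hs2 in *. lra. }
  assert (Hgt : INR n - 1 > deg n adj t).
  { pose proof (Hst t ltac:(lia)). pose proof (Hlow 0%nat ltac:(lia)).
    rewrite !Hs2 in *. lra. }
  exists t. split; [exact Ht|]. split; [apply (bidegreed_of_split t); auto; lia|].
  split; [exact Hlow|]. split; [exact Hhigh|exact Hgt].
Qed.

Lemma ratio_swap k j : ratio n adj alpha k j * ratio n adj alpha j k = 1.
Proof.
  unfold ratio. pose proof (Rpower_pos (deg n adj k) alpha).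
  pose proof (Rpower_pos (deg n adj j) alpha). field. lra.
Qed.

Lemma ratio_inj k k' j :
  alpha <> 0 -> (k < n)%nat -> (k' < n)%nat ->
  ratio n adj alpha k j = ratio n adj alpha k' j -> deg n adj k = deg n adj k'.
Proof.
  intros A Hk Hk' E. apply (Rpower_inj _ _ alpha A); try apply deg_pos; auto.
  unfold ratio in E. pose proof (Rpower_pos (deg n adj j) alpha).
  pose proof (Rpower_pos (deg n adj k) alpha). pose proof (Rpower_pos (deg n adj k') alpha).
  apply Rinv_eq_reg. apply (Rmult_eq_reg_l (Rpower (deg n adj j) alpha)); [exact E|lra].
Qed.

Section ApexZero.

Hypothesis A_ne0 : alpha <> 0.
Hypothesis Hapex0 : apex n adj alpha Delta N 0%nat.

(* all ratios into the apex equal [N], so the other vertices share a degree *)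
Lemma star_degrees k : (1 <= k < n)%nat -> deg n adj k = deg n adj 1%nat.
Proof.
  intros Hk. destruct Hapex0 as [_ Ha].
  apply (ratio_inj k 1 0); auto; try lia.
  rewrite (proj2 (Ha k ltac:(lia) ltac:(lia))), (proj2 (Ha 1%nat ltac:(lia) ltac:(lia))).
  reflexivity.
Qed.

(* A degree drop at the apex forces a positive exponent: for alpha < 0 the
   ratio into the apex, which is the maximum [N], would be at most 1, while its
   inverse, the ratio out of the apex, is also at most [N]. *)
Lemma star_alpha_pos : deg n adj 1%nat < deg n adj 0%nat -> alpha > 0.
Proof.
  intros Hlt. destruct (Rtotal_order alpha 0) as [Aneg|[A0|Apos]]; [|contradiction|exact Apos].
  exfalso. destruct Hapex0 as [_ Ha].
  destruct (Ha 1%nat ltac:(lia) ltac:(lia)) as [E10 R10].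
  assert (R01 : ratio n adj alpha 0 1 <= N).
  { apply HN; try lia. rewrite (proj1 Hsimple 0%nat 1%nat) by lia. exact E10. }
  assert (R10le : ratio n adj alpha 1 0 <= 1).
  { unfold ratio. pose proof (Rpower_pos (deg n adj 1%nat) alpha).
    pose proof (Rpower_antitone (deg n adj 0%nat) (deg n adj 1%nat) alpha
                  ltac:(lra) (deg_pos 1 ltac:(lia)) ltac:(lra)).
    apply Rmult_le_reg_r with (Rpower (deg n adj 1%nat) alpha); [lra|].
    unfold Rdiv. rewrite Rmult_assoc, Rinv_l; lra. }
  pose proof (ratio_swap 0 1). pose proof (ratio_pos n adj alpha 0 1).
  assert (R10eq : ratio n adj alpha 1 0 = ratio n adj alpha 0 0).
  { unfold ratio at 2. rewrite Rdiv_diag by (apply Rgt_not_eq, Rpower_pos). nra. }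
  apply (ratio_inj 1 0 0) in R10eq; auto; try lia. lra.
Qed.

End ApexZero.

Lemma star_of_apexes :
  alpha <> 0 -> s i < s 0%nat -> (forall k, (i <= k < n)%nat -> s k = s i) ->
  (forall j, (j < n)%nat -> s i < s j -> apex n adj alpha Delta N j) ->
  alpha > 0 /\ dominating_star n adj alpha.
Proof.
  intros A Hdrop Htail Hapex.
  assert (Hap0 := Hapex 0%nat ltac:(lia) Hdrop).
  assert (H0d := apex_dominating 0 ltac:(lia) Hap0).
  assert (Hd1 := star_degrees A Hap0).
  assert (Hi1 : (1 <= i)%nat) by (destruct (Nat.eq_dec i 0) as [E|]; [rewrite E in Hdrop; lra|lia]).
  assert (Hd1lt : deg n adj 1%nat < INR n - 1).
  { destruct (deg_le_order n adj Hsimple 1 ltac:(lia)) as [|E]; [assumption|].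
    assert (Hreg : forall k, (k < n)%nat -> deg n adj k = INR n - 1).
    { intros k Hk. destruct (Nat.eq_dec k 0) as [->|]; [exact H0d|]. rewrite Hd1; auto; lia. }
    pose proof (sdeg_regular n adj alpha i _ Hi Hreg).
    pose proof (sdeg_regular n adj alpha 0 _ ltac:(lia) Hreg). unfold s in Hdrop. lra. }
  assert (Hs1 : s 1%nat = s i).
  { destruct (Rle_lt_or_eq_dec _ _ (s_antitone 1 i ltac:(lia))) as [Lt|]; [|auto].
    pose proof (apex_dominating 1 ltac:(lia) (Hapex 1%nat ltac:(lia) Lt)). lra. }
  split; [apply star_alpha_pos; auto; lra|].
  split; [apply (bidegreed_of_split 1); auto; try lia; intros k Hk;
          replace k with 0%nat by lia; exact H0d|].
  split; [change (s 0%nat > s 1%nat); lra|].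
  split.
  { intros k Hk. change (s k = s 1%nat). rewrite Hs1.
    destruct (Nat.le_gt_cases k i); [|apply Htail; lia].
    pose proof (s_antitone 1 k ltac:(lia)). pose proof (s_antitone k i ltac:(lia)). lra. }
  split; [exact H0d|]. split; [exact Hd1|lra].
Qed.

Lemma apexes_of_prefix t :
  alpha = 0 -> (1 <= t <= i)%nat -> dominating_prefix n adj t ->
  s i < s 0%nat /\ (forall k, (i <= k < n)%nat -> s k = s i) /\
  (forall j, (j < n)%nat -> s i < s j -> apex n adj alpha Delta N j).
Proof.
  intros A0 Ht [_ [Hlow [Hhigh Hgt]]].
  assert (Hs2 : forall k, s k = 2 * deg n adj k)
    by (intros k; unfold s; rewrite A0; apply sdeg_alpha0).
  assert (H0d := Hlow 0%nat ltac:(lia)).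
  assert (Hsi : s i = 2 * deg n adj t) by (rewrite (Hs2 i), (Hhigh i) by lia; reflexivity).
  split; [rewrite Hsi, (Hs2 0%nat), H0d; lra|].
  split; [intros k Hk; rewrite Hsi, (Hs2 k), (Hhigh k) by lia; reflexivity|].
  intros j Hj Hlt.
  assert (Hjt : (j < t)%nat).
  { destruct (Nat.lt_ge_cases j t) as [|Hge]; [assumption|].
    rewrite Hsi, (Hs2 j), (Hhigh j) in Hlt by lia. lra. }
  split; [rewrite (Delta_dominating 0 ltac:(lia) H0d); apply Hlow; exact Hjt|].
  intros k Hk Hkj. split.
  - apply (deg_full_iff n adj Hsimple j Hj); auto.
  - rewrite (N_alpha0 A0), A0. apply ratio_alpha0.
Qed.

Lemma star_max_ratio :
  0 <= alpha -> deg n adj 0%nat = INR n - 1 ->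
  (forall k, (1 <= k < n)%nat -> deg n adj k = deg n adj 1%nat) ->
  N = ratio n adj alpha 1 0.
Proof.
  intros A H0d Hd1.
  assert (Hbnd : forall k, (k < n)%nat -> deg n adj 1%nat <= deg n adj k <= INR n - 1).
  { intros k Hk. split; [|apply deg_le_order; auto].
    destruct (Nat.eq_dec k 0) as [->|]; [rewrite H0d; apply deg_le_order; auto; lia|].
    rewrite (Hd1 k) by lia. lra. }
  pose proof (deg_pos 1 ltac:(lia)).
  apply Rle_antisym.
  - destruct HN as [[a [b [Ha [Hb [_ <-]]]]] _]. unfold ratio. rewrite H0d.
    pose proof (Hbnd a Ha). pose proof (Hbnd b Hb). pose proof (Rpower_pos (deg n adj a) alpha).
    pose proof (Rle_Rpower_l (deg n adj b) (INR n - 1) alpha A ltac:(lra)).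
    pose proof (Rle_Rpower_l (deg n adj 1%nat) (deg n adj a) alpha A ltac:(lra)).
    unfold Rdiv. apply Rmult_le_compat; try lra.
    + left. apply Rpower_pos.
    + left. apply Rinv_0_lt_compat. lra.
    + apply Rinv_le_contravar; [apply Rpower_pos|lra].
  - apply HN; try lia. apply (deg_full_iff n adj Hsimple 0); auto; lia.
Qed.

Lemma apexes_of_star :
  alpha > 0 -> (1 <= i)%nat -> dominating_star n adj alpha ->
  s i < s 0%nat /\ (forall k, (i <= k < n)%nat -> s k = s i) /\
  (forall j, (j < n)%nat -> s i < s j -> apex n adj alpha Delta N j).
Proof.
  intros A Hi1 [_ [H01 [Hs1 [H0d [Hd1 Hgt]]]]].
  assert (Hsi : s i = s 1%nat) by (apply Hs1; lia).
  split; [change (s 1%nat < s 0%nat) in H01; lra|].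
  split; [intros k Hk; rewrite Hsi; apply Hs1; lia|].
  intros j Hj Hlt.
  assert (j = 0%nat) as ->.
  { destruct (Nat.eq_dec j 0) as [|Hj0]; [assumption|].
    assert (s j = s 1%nat) by (apply Hs1; lia). lra. }
  split; [rewrite (Delta_dominating 0 ltac:(lia) H0d); exact H0d|].
  intros k Hk Hk0. split.
  - apply (deg_full_iff n adj Hsimple 0); auto; lia.
  - rewrite (star_max_ratio ltac:(lra) H0d Hd1). unfold ratio.
    rewrite (Hd1 k) by lia. reflexivity.
Qed.

Lemma apexes_iff_extremal :
  s i < s 0%nat /\ (forall k, (i <= k < n)%nat -> s k = s i) /\
  (forall j, (j < n)%nat -> s i < s j -> apex n adj alpha Delta N j) <->
  extremal n adj alpha i.
Proof.
  split.
  - intros [Hdrop [Htail Hapex]]. destruct (Req_dec alpha 0) as [A0|A].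
    + destruct (prefix_of_apexes A0 Hdrop Htail Hapex) as [t [Ht Hpre]].
      exists t. split; [exact Ht|]. left. split; assumption.
    + exists 1%nat. split.
      * destruct (Nat.eq_dec i 0) as [E|]; [rewrite E in Hdrop; lra|lia].
      * right. apply star_of_apexes; assumption.
  - intros [t [Ht [[A0 Hpre]|[A Hstar]]]].
    + apply (apexes_of_prefix t); assumption.
    + apply apexes_of_star; auto; lia.
Qed.

End Extremal.

Theorem theorem4 (n : nat) (adj : nat -> nat -> bool) (alpha Delta N rho : R) :
  (2 <= n)%nat ->
  simple_graph n adj ->
  connected n adj ->
  (forall k, (S k < n)%nat ->
     gen_avg_deg n adj alpha k + deg n adj k >=
     gen_avg_deg n adj alpha (S k) + deg n adj (S k)) ->
  is_max_degree n adj Delta ->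
  is_max_ratio n adj alpha N ->
  spectral_radius n (signless_laplacian n adj) rho ->
  let s := fun k => gen_avg_deg n adj alpha k + deg n adj k in
  forall i, (i < n)%nat ->
    let bound :=
      (s i + Delta - N +
       sqrt ((s i - Delta + N) ^ 2 + 4 * N * sumR (fun k => s k - s i) i)) / 2 in
    rho <= bound /\
    (rho = bound <->
       ((forall k, (k < n)%nat -> s k = s 0%nat) \/
        (exists t, (1 <= t <= i)%nat /\
           ((alpha = 0 /\ bidegreed n adj /\
             (forall k, (k < t)%nat -> deg n adj k = INR n - 1) /\
             (forall k, (t <= k < n)%nat -> deg n adj k = deg n adj t) /\
             INR n - 1 > deg n adj t) \/
            (alpha > 0 /\ bidegreed n adj /\
             s 0%nat > s 1%nat /\
             (forall k, (1 <= k < n)%nat -> s k = s 1%nat) /\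
             deg n adj 0%nat = INR n - 1 /\
             (forall k, (1 <= k < n)%nat -> deg n adj k = deg n adj 1%nat) /\
             INR n - 1 > deg n adj 1%nat))))).
Proof.
  intros Hn Hsimple Hconn Hstep HDelta HN Hrho s i Hi bound.
  assert (Hanti := antitone_of_step (sdeg n adj alpha) n Hstep).
  split.
  - exact (spectral_radius_le_bound n adj alpha Delta N Hsimple HDelta HN Hanti i Hi rho Hrho).
  - pose proof (spectral_radius_eq_bound_iff n adj alpha Delta N Hsimple HDelta HN Hanti
                  i Hi rho Hconn Hrho) as Eq_slack.
    pose proof (slack_free_iff n adj alpha Delta N HDelta HN Hanti i Hi) as Slack.
    pose proof (apexes_iff_extremal n adj alpha Delta N Hn Hsimple Hconn HDelta HN Hanti i Hi)
      as Extremal.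
    change (rho = theta n adj alpha Delta N i <->
            (forall k, (k < n)%nat -> sdeg n adj alpha k = sdeg n adj alpha 0%nat) \/
            extremal n adj alpha i).
    rewrite Eq_slack, Slack, Extremal. reflexivity.
Qed.
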